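(* Suppose the Lipschitz assumption holds. Then for each $t\in\mathbb N_T$ there exist constants $K^3_t,K^4_t>0$ such that for every $\gamma\in\mathcal G$ and all $z_1,z_2\in\mathcal I(\mathcal X)$, $$\|\hat f_t(z_1,\gamma)-\hat f_t(z_2,\gamma)\|_\infty\le K^3_t\|z_1-z_2\|_\infty,\qquad |\hat c_t(z_1,\gamma)-\hat c_t(z_2,\gamma)|\le K^4_t\|z_1-z_2\|_\infty.$$
   Context: Let $T\in\mathbb N$, $\mathbb N_T=\{1,\dots,T\}$, $\mathcal X,\mathcal U,\mathcal W$ finite sets, $\mathcal I(\mathcal X)=[0,1]^{\mathcal X}$. For each $t$, let $f_t:\mathcal X\times\mathcal U\times\mathcal W\times\mathcal I(\mathcal X)\to\mathcal X$, let $\mathbb P(w_t=\cdot)$ be a probability law on $\mathcal W$, and $\mathbb P(y|x,u,z)=\sum_w\mathbb 1(f_t(x,u,w,z)=y)\mathbb P(w_t=w)$; let $\ell_t:\mathcal X\times\mathcal U\times\mathcal I(\mathcal X)\to\mathbb R_{\ge0}$. Lipschitz assumption: constants $K^1_t,K^2_t>0$ with $|\mathbb P(y|x,u,z_1)-\mathbb P(y|x,u,z_2)|\le K^1_t\|z_1-z_2\|_\infty$ and $|\ell_t(x,u,z_1)-\ell_t(x,u,z_2)|\le K^2_t\|z_1-z_2\|_\infty$ for all $x,y\in\mathcal X$, $u\in\mathcal U$, $z_1,z_2\in\mathcal I(\mathcal X)$. $\mathcal G$ is the set of all maps $\gamma:\mathcal X\to\mathcal U$. For $z\in\mathcal I(\mathcal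 X)$: $\hat f_t(z,\gamma)(y)=\sum_{x\in\mathcal X}z(x)\mathbb P(y|x,\gamma(x),z)$, $y\in\mathcal X$, and $\hat c_t(z,\gamma)=\sum_x z(x)\ell_t(x,\gamma(x),z)$. *)

From mathcomp Require Import all_boot all_order all_algebra.
From mathcomp Require Import reals.
Set Implicit Arguments. Unset Strict Implicit. Unset Printing Implicit Defensive.
Import Order.TTheory GRing.Theory Num.Theory.
Local Open Scope ring_scope.

Section Defs.
Variables (R : realType) (X U W : finType).

Definition inI (z : X -> R) : Prop := forall x, 0 <= z x <= 1.

(* sup norm on R^X (X finite); equals 0 when X is empty *)
Definition supnorm (z : X -> R) : R := \big[Num.max/0]_(x : X) `|z x|.

Definition prob_law (p : W -> R) : Prop :=
  (forall w, 0 <= p w) /\ \sum_(w : W) p w = 1.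

Definition trans (f : nat -> X -> U -> W -> (X -> R) -> X) (pw : nat -> W -> R)
  (t : nat) (y x : X) (u : U) (z : X -> R) : R :=
  \sum_(w : W) (f t x u w z == y)%:R * pw t w.

Definition fhat (f : nat -> X -> U -> W -> (X -> R) -> X) (pw : nat -> W -> R)
  (t : nat) (z : X -> R) (g : X -> U) (y : X) : R :=
  \sum_(x : X) z x * trans f pw t y x (g x) z.

Definition chat (l : nat -> X -> U -> (X -> R) -> R)
  (t : nat) (z : X -> R) (g : X -> U) : R :=
  \sum_(x : X) z x * l t x (g x) z.

Definition lipschitz_assumption (T : nat)
  (f : nat -> X -> U -> W -> (X -> R) -> X) (pw : nat -> W -> R)
  (l : nat -> X -> U -> (X -> R) -> R) : Prop :=
  forall t : nat, (1 <= t <= T)%N ->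
    exists K1 K2 : R, 0 < K1 /\ 0 < K2 /\
      forall (x y : X) (u : U) (z1 z2 : X -> R), inI z1 -> inI z2 ->
        `|trans f pw t y x u z1 - trans f pw t y x u z2|
          <= K1 * supnorm (fun x' => z1 x' - z2 x') /\
        `|l t x u z1 - l t x u z2| <= K2 * supnorm (fun x' => z1 x' - z2 x').
End Defs.

(** Both maps are sums over the finite state space of products [z x * q_z x],
    where [q_z] is a transition probability or a cost. Writing
    [z1 x q1 x - z2 x q2 x = (z1 x - z2 x) q1 x + z2 x (q1 x - q2 x)], each term
    is bounded by [(B + K) ||z1 - z2||] as soon as [|q1| <= B], [|z2| <= 1] and [q]
    is [K]-Lipschitz in [z]. Transition probabilities are bounded by 1, and a cost
    that is Lipschitz on the bounded set [I(X)] is bounded there by its values at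
    [z = 0] plus [K^2_t]; so [K^3_t] and [K^4_t] are [#|X|] times these
    constants (plus 1, for strict positivity). *)

From mathcomp Require Import all_boot all_order all_algebra.
From mathcomp Require Import reals.
From mathcomp Require Import ring lra.
Set Implicit Arguments. Unset Strict Implicit. Unset Printing Implicit Defensive.
Import Order.TTheory GRing.Theory Num.Theory.
Local Open Scope ring_scope.

Section FiniteStateSpace.
Variables (R : realType) (X : finType).
Implicit Types (h z : X -> R).

Lemma supnorm_ge0 h : 0 <= supnorm h.
Proof. exact: bigmax_ge_id. Qed.

Lemma ler_supnorm h x : `|h x| <= supnorm h.
Proof. exact: le_bigmax. Qed.

Lemma supnorm_le h c : 0 <= c -> (forall x, `|h x| <= c) -> supnorm h <= c.
Proof. by move=> c_ge0 hc; apply: bigmax_le. Qed.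

Lemma inI_norm_le1 z : inI z -> forall x, `|z x| <= 1.
Proof. by move=> zI x; have /andP[z_ge0 z_le1] := zI x; rewrite ger0_norm. Qed.

Lemma inI0 : inI (fun _ : X => 0 : R).
Proof. by move=> x; rewrite lexx ler01. Qed.

Lemma lipschitz_on_inI_bounded (h : (X -> R) -> R) K z :
    0 <= K ->
    (forall z1 z2, inI z1 -> inI z2 ->
       `|h z1 - h z2| <= K * supnorm (fun x => z1 x - z2 x)) ->
  inI z -> `|h z| <= `|h (fun=> 0)| + K.
Proof.
move=> K_ge0 h_lip zI.
have dist0 : K * supnorm (fun x => z x - 0) <= K.
  rewrite -[leRHS]mulr1 ler_wpM2l // supnorm_le // => x.
  by rewrite subr0; apply: inI_norm_le1.
have tri := ler_normD (h z - h (fun=> 0)) (h (fun=> 0)); rewrite subrK in tri.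
apply: le_trans tri _; rewrite addrC lerD2l.
exact: le_trans (h_lip _ _ zI inI0) dist0.
Qed.

Lemma weighted_sum_lipschitz (z1 z2 q1 q2 : X -> R) (B K : R) :
    (forall x, `|z2 x| <= 1) -> (forall x, `|q1 x| <= B) ->
    (forall x, `|q1 x - q2 x| <= K * supnorm (fun x => z1 x - z2 x)) ->
  `|\sum_x z1 x * q1 x - \sum_x z2 x * q2 x|
    <= #|X|%:R * (B + K) * supnorm (fun x => z1 x - z2 x).
Proof.
move=> z2_le1 q1_leB q_lip; set N := supnorm _.
rewrite -sumrB (eq_bigr (fun x => (z1 x - z2 x) * q1 x + z2 x * (q1 x - q2 x))); last first.
  by move=> x _; ring.
apply: le_trans (ler_norm_sum _ _ _) _.
rewrite -mulrA mulr_natl -sumr_const; apply: ler_sum => x _.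
apply: le_trans (ler_normD _ _) _; rewrite !normrM mulrDl [B * N]mulrC.
apply: lerD; first exact: ler_pM (ler_supnorm (fun x => z1 x - z2 x) x) (q1_leB x).
by rewrite -[K * N]mul1r; apply: ler_pM.
Qed.

End FiniteStateSpace.

Lemma norm_trans_le1 (R : realType) (X U W : finType)
    (f : nat -> X -> U -> W -> (X -> R) -> X) (pw : nat -> W -> R) t y x u z :
  prob_law (pw t) -> `|trans f pw t y x u z| <= 1.
Proof.
case=> pw_ge0 pw_sum1.
have trans_ge0 : 0 <= trans f pw t y x u z by apply: sumr_ge0 => w _; rewrite mulr_ge0.
rewrite ger0_norm // -pw_sum1; apply: ler_sum => w _.
by rewrite ler_piMl //; case: eqP.
Qed.

Theorem lemma1 (R : realType) (X U W : finType) (T : nat)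
  (f : nat -> X -> U -> W -> (X -> R) -> X) (pw : nat -> W -> R)
  (l : nat -> X -> U -> (X -> R) -> R)
  (Hpw : forall t : nat, (1 <= t <= T)%N -> prob_law (pw t))
  (Hl : forall (t : nat) (x : X) (u : U) (z : X -> R),
          (1 <= t <= T)%N -> inI z -> 0 <= l t x u z)
  (Hlip : lipschitz_assumption T f pw l) :
  forall t : nat, (1 <= t <= T)%N ->
    exists K3 K4 : R, 0 < K3 /\ 0 < K4 /\
      forall (g : X -> U) (z1 z2 : X -> R), inI z1 -> inI z2 ->
        supnorm (fun y => fhat f pw t z1 g y - fhat f pw t z2 g y)
          <= K3 * supnorm (fun x => z1 x - z2 x) /\
        `|chat l t z1 g - chat l t z2 g|
          <= K4 * supnorm (fun x => z1 x - z2 x).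
Proof.
move=> t Ht; have [K1 [K2 [K1_gt0 [K2_gt0 lip]]]] := Hlip t Ht.
set M := supnorm (fun p : X * U => l t p.1 p.2 (fun=> 0)).
have l_bounded x u z : inI z -> `|l t x u z| <= M + K2.
  move=> zI; apply: le_trans (lipschitz_on_inI_bounded (ltW K2_gt0) _ zI) _.
    by move=> z1 z2 z1I z2I; case: (lip x x u z1 z2 z1I z2I).
  by rewrite lerD2r; apply: (ler_supnorm _ (x, u)).
have M_ge0 : 0 <= M by apply: supnorm_ge0.
set n := (#|X|%:R : R); have n_ge0 : 0 <= n by apply: ler0n.
have lift (a N : R) : 0 <= N -> a * N <= (a + 1) * N by move=> N_ge0; rewrite ler_wpM2r ?lerDl.
exists (n * (1 + K1) + 1), (n * (M + K2 + K2) + 1).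
split; [|split]; [nra|nra|move=> g z1 z2 z1I z2I].
have N_ge0 := supnorm_ge0 (fun x => z1 x - z2 x).
split; last first.
  apply: le_trans (lift _ _ N_ge0).
  apply: weighted_sum_lipschitz (inI_norm_le1 z2I) _ _ => x; first exact: l_bounded.
  by case: (lip x x (g x) z1 z2 z1I z2I).
apply: supnorm_le => [|y]; first by apply: mulr_ge0 => //; nra.
apply: le_trans (lift _ _ N_ge0).
apply: weighted_sum_lipschitz (inI_norm_le1 z2I) _ _ => x.
  exact: norm_trans_le1 (Hpw t Ht).
by case: (lip x y (g x) z1 z2 z1I z2I).
Qed.
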